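(* Let $G_1$ and $G_2$ be two disjoint $(k+1)$-critical hypergraphs with $k\ge2$, let $\tilde e\in E(G_1)$ be an ordinary edge (i.e. $|\tilde e|=2$), let $\tilde v\in V(G_2)$ be arbitrary, and let $s$ be an admissible map for $(\tilde e,G_2,\tilde v)$. Let $G=S(G_1,\tilde e,G_2,\tilde v,s)$ and $G_2'=G[(V(G_2)\setminus\{\tilde v\})\cup\tilde e]$. If $\chi(G_2')\le k$, then $G$ is $(k+1)$-critical and $\tilde e$ is a separating vertex set of $G$ of size $2$.
   Context: A hypergraph is a pair $G=(V,E)$ of finite sets with $E\subseteq 2^V$ and $|e|\ge2$ for all $e\in E$. A coloring requires every edge to contain two vertices of different colors; $\chi$ is the chromatic number. $G$ is $(k+1)$-critical if $\chi(G)=k+1$ but $\chi(H)\le k$ for every proper subhypergraph $H$. $G[X]$ has vertex set $X$ and the edges of $G$ contained in $X$. $\partial_G(v)$ is the set of edges containing $v$. A set $S\subseteq V(G)$ is a separating vertex set if $G$ is the union of two induced subhypergraphs $G_1,G_2$ with $V(G_1)\cap V(G_2)=S$ and $|V(G_i)|>|S|$. Splitting: let $G_1,G_2$ be disjoint hypergraphs, $\tilde e\in E(G_1)$, $\tilde v\in V(G_2)$, and $s:\partial_{G_2}(\tilde v)\to 2^{\tilde e}$ a map (called admissible) with $s(e)\ne\varnothing$ for all $e$ and $\bigcup_{e}s(e)=\tilde e$. Then $S(G_1,\tilde e,G_2,\tilde v,s)$ is the hypergraph with vertex set $V(G_1)\cup(V(G_2)\setminus\{\tilde v\})$ and edge set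 $(E(G_1)\setminus\{\tilde e\})\cup(E(G_2)\setminus\partial_{G_2}(\tilde v))\cup\{(e\setminus\{\tilde v\})\cup s(e): e\in\partial_{G_2}(\tilde v)\}$. *)

From mathcomp Require Import all_boot.
Set Implicit Arguments. Unset Strict Implicit. Unset Printing Implicit Defensive.

Record hgraph (T : finType) := HG { hV : {set T}; hE : {set {set T}} }.

Section Hyper.
Variable T : finType.

Definition is_hypergraph (G : hgraph T) : Prop :=
  forall e, e \in hE G -> e \subset hV G /\ 2 <= #|e|.

Definition coloring (G : hgraph T) (k : nat) (f : T -> nat) : Prop :=
  (forall x, x \in hV G -> f x < k) /\
  (forall e, e \in hE G -> exists x y, [/\ x \in e, y \in e & f x != f y]).

Definition colorable (G : hgraph T) (k : nat) : Prop := exists f, coloring G k f.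

Definition chi_eq (G : hgraph T) (n : nat) : Prop :=
  colorable G n /\ forall m, m < n -> ~ colorable G m.

Definition subhypergraph (H G : hgraph T) : Prop :=
  is_hypergraph H /\ hV H \subset hV G /\ hE H \subset hE G.

Definition proper_subhypergraph (H G : hgraph T) : Prop :=
  subhypergraph H G /\ H <> G.

Definition critical (n : nat) (G : hgraph T) : Prop :=
  chi_eq G n /\ forall H, proper_subhypergraph H G -> colorable H n.-1.

Definition induced (G : hgraph T) (X : {set T}) : hgraph T :=
  HG X [set e in hE G | e \subset X].

Definition star (G : hgraph T) (v : T) : {set {set T}} :=
  [set e in hE G | v \in e].

(* s : ∂_{G2}(v) -> 2^e~ admissible (values outside ∂_{G2}(v) are irrelevant) *)
Definition admissible (et : {set T}) (G2 : hgraph T) (vt : T)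
  (s : {set T} -> {set T}) : Prop :=
  (forall e, e \in star G2 vt -> s e != set0 /\ s e \subset et) /\
  \bigcup_(e in star G2 vt) s e = et.

Definition splitting (G1 : hgraph T) (et : {set T}) (G2 : hgraph T) (vt : T)
  (s : {set T} -> {set T}) : hgraph T :=
  HG (hV G1 :|: (hV G2 :\ vt))
     ((hE G1 :\ et) :|: (hE G2 :\: star G2 vt)
        :|: [set (e :\ vt) :|: s e | e in star G2 vt]).

Definition separating (G : hgraph T) (S : {set T}) : Prop :=
  exists X1 X2 : {set T},
    [/\ hV G = X1 :|: X2,
        hE G = hE (induced G X1) :|: hE (induced G X2),
        X1 :&: X2 = S,
        #|S| < #|X1| & #|S| < #|X2|].

End Hyper.

From mathcomp Require Import all_boot.
Set Implicit Arguments. Unset Strict Implicit. Unset Printing Implicit Defensive.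

(* A k-coloring of the splitting G either separates the ends x, y of et, and then
   it colors G1, or gives them a common color, and then coloring vt with that color
   colors G2; hence G is not k-colorable.  Deleting an edge of G coming from G1 - et,
   a k-coloring of G1 minus that edge separates x and y, and so does any k-coloring
   of G2' (otherwise G2 would be k-colorable): after permuting colors the two agree
   on et and glue to a coloring.  Deleting an edge coming from G2, a k-coloring of
   G2 minus that edge glues with a k-coloring of G1 - et, which colors x and y alike,
   permuted so that they receive the color of vt.  Finally V(G1) and
   (V(G2) - vt) + et split G along et. *)

Section Colorings.
Variable T : finType.
Implicit Types (G H : hgraph T) (f : T -> nat).

Definition del_edge G (e : {set T}) := HG (hV G) (hE G :\ e).

Definition polychromatic f (e : {set T}) :=
  exists x y, [/\ x \in e, y \in e & f x != f y].

Lemma polychromatic_transfer (A B : {set T}) f g :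
  (forall a, a \in A -> exists2 b, b \in B & g b = f a) ->
  polychromatic f A -> polychromatic g B.
Proof.
move=> tr [u [w [uA wA ne]]]; have [b1 b1B e1] := tr u uA.
by have [b2 b2B e2] := tr w wA; exists b1, b2; rewrite e1 e2.
Qed.

Lemma induced_edgeE G X e : (e \in hE (induced G X)) = (e \in hE G) && (e \subset X).
Proof. by rewrite inE. Qed.

Lemma coloring_sub G H k f : hV H \subset hV G -> hE H \subset hE G ->
  coloring G k f -> coloring H k f.
Proof.
move=> sV sE [fV fE]; split=> [x xH|e eH]; first exact/fV/(subsetP sV).
exact/fE/(subsetP sE).
Qed.

Lemma colorable_leq G m n : m <= n -> colorable G m -> colorable G n.
Proof.
by move=> mn [f [fV fE]]; exists f; split=> // x xG; apply: leq_trans (fV x xG) mn.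
Qed.

Lemma del_edge_proper G e : is_hypergraph G -> e \in hE G ->
  proper_subhypergraph (del_edge G e) G.
Proof.
move=> hG eG; split; first split.
- by move=> e' /setD1P [_ /hG].
- by split=> //=; apply/subsetP=> z /setD1P [].
by move/(f_equal (@hE T)) => /= /setP /(_ e); rewrite !inE eqxx eG.
Qed.

Lemma critical_not_colorable k G : critical k.+1 G -> ~ colorable G k.
Proof. by case=> [[_ h] _]; apply: h. Qed.

Lemma critical_del_edge_colorable k G e : is_hypergraph G -> critical k.+1 G ->
  e \in hE G -> colorable (del_edge G e) k.
Proof. by move=> hG [_ h] eG; apply: h; apply: del_edge_proper. Qed.

(* An isolated vertex could be deleted without changing the chromatic number. *)
Lemma critical_vertex_in_edge k G v : 0 < k -> is_hypergraph G -> critical k.+1 G ->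
  v \in hV G -> exists2 e, e \in hE G & v \in e.
Proof.
move=> k0 hG cG vG; have [/exists_inP //|] := boolP [exists e in hE G, v \in e].
rewrite negb_exists_in => /forall_inP nv; exfalso.
set H := HG (hV G :\ v) (hE G).
have hH : is_hypergraph H.
  move=> e /= eG; have [/subsetP eV e2] := hG e eG; split=> //.
  apply/subsetP=> z ze; rewrite !inE eV // andbT.
  by apply: contraNneq (nv e eG) => <-.
have [f [fV fE]] : colorable H k.
  case: cG => _; apply; split; first by split=> //; split=> //=; apply: subD1set.
  by move/(f_equal (@hV T)) => /= /setP /(_ v); rewrite !inE eqxx vG.
apply: (critical_not_colorable cG); exists (fun z => if z == v then 0 else f z).
split=> [x xG|e eG]; first by case: eqP => // /eqP xv; apply: fV; rewrite !inE xv.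
apply: polychromatic_transfer (fE e eG) => z ze; exists z => //.
by case: eqP ze (nv e eG) => // -> ->.
Qed.

Lemma edge_other_vertex G e v : is_hypergraph G -> e \in hE G ->
  exists2 w, w \in hV G & w \in e :\ v.
Proof.
move=> hG eG; have [/subsetP eV e2] := hG e eG.
have /set0Pn [w wev] : e :\ v != set0.
  rewrite -card_gt0 -(ltn_add2l (v \in e)) -cardsD1 addn0.
  by apply: leq_trans e2; case: (v \in e).
by exists w => //; apply: eV; move: wev; rewrite inE => /andP [].
Qed.

Lemma colorable_succ_of_del_edge G k : is_hypergraph G ->
  (forall e, e \in hE G -> colorable (del_edge G e) k) -> colorable G k.+1.
Proof.
move=> hG dc; have [E0|[e0 e0G]] := set_0Vmem (hE G).
  by exists (fun=> 0); split=> // e; rewrite E0 inE.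
have [f [fV fE]] := dc e0 e0G; have [/subsetP e0V e02] := hG e0 e0G.
have /set0Pn [v ve0] : e0 != set0 by rewrite -card_gt0; apply: leq_trans e02.
exists (fun z => if z == v then k else f z); split=> [x xG|e eG].
  by case: eqP => // _; apply: ltnW; apply: fV.
case: (boolP (v \in e)) => ve.
  have [w wG] := edge_other_vertex v hG eG; rewrite !inE => /andP [wv we].
  by exists v, w; split=> //; rewrite eqxx (negbTE wv) eq_sym ltn_eqF // fV.
have ee0 : e \in hE G :\ e0 by rewrite !inE eG andbT; apply: contraNneq ve => ->.
apply: polychromatic_transfer (fE e ee0) => z ze; exists z => //.
by case: eqP ze ve => // -> ->.
Qed.

Lemma proper_subhypergraph_missing_edge G H :
  (forall v, v \in hV G -> exists2 e, e \in hE G & v \in e) ->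
  proper_subhypergraph H G -> exists2 e, e \in hE G & e \notin hE H.
Proof.
move=> cover [[hH [sV sE]] nHG].
have [/exists_inP [e eG eH]|] := boolP [exists e in hE G, e \notin hE H]; first by exists e.
rewrite negb_exists_in => /forall_inP /= allE; exfalso; apply: nHG.
have EE : hE H = hE G.
  by apply/eqP; rewrite eqEsubset sE; apply/subsetP=> e /allE /negPn.
have VV : hV H = hV G.
  apply/eqP; rewrite eqEsubset sV; apply/subsetP=> v /cover [e].
  by rewrite -EE => /hH [/subsetP eV _] /eV.
by case: H {hH sV sE allE} EE VV => ? ? /= -> ->; case: G {cover}.
Qed.

Lemma critical_intro k G : is_hypergraph G -> ~ colorable G k ->
  (forall e, e \in hE G -> colorable (del_edge G e) k) ->
  (forall v, v \in hV G -> exists2 e, e \in hE G & v \in e) -> critical k.+1 G.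
Proof.
move=> hG nc dc cover; split; first split.
- exact: colorable_succ_of_del_edge.
- by move=> m; rewrite ltnS => mk /(colorable_leq mk).
move=> H HG; have [e eG eH] := proper_subhypergraph_missing_edge cover HG.
have [[_ [sV sE]] _] := HG; have [f cf] := dc e eG; exists f.
apply: coloring_sub cf => //=; apply/subsetP=> e' e'H.
by rewrite !inE (subsetP sE _ e'H) andbT; apply: contraNneq eH => <-.
Qed.

Lemma coloring_of_del_edge G k f e : coloring (del_edge G e) k f ->
  polychromatic f e -> coloring G k f.
Proof.
move=> [fV fE] fe; split=> // e' e'G.
by case: (eqVneq e' e) => [-> //|ne]; apply: fE; rewrite !inE ne.
Qed.

Lemma polychromatic_pair f x y : polychromatic f [set x; y] <-> f x != f y.
Proof.
split=> [[u [w []]]|ne]; last by exists x, y; rewrite !inE !eqxx orbT.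
by rewrite !inE => /orP [] /eqP -> /orP [] /eqP ->; rewrite ?eqxx // eq_sym.
Qed.

Definition swap_color (a b z : nat) := if z == a then b else if z == b then a else z.

Lemma swap_colorK a b : involutive (swap_color a b).
Proof.
move=> z; rewrite /swap_color; case: (eqVneq z a) => [->|za].
  by case: (eqVneq b a) => [->|]; rewrite ?eqxx.
case: (eqVneq z b) => [->|zb]; first by rewrite eqxx.
by rewrite (negbTE za) (negbTE zb).
Qed.

Lemma swap_color_lt a b z k : a < k -> b < k -> z < k -> swap_color a b z < k.
Proof. by rewrite /swap_color; case: (z == a); case: (z == b). Qed.

Lemma coloring_relabel G k f pi : (forall z, z < k -> pi z < k) -> injective pi ->
  coloring G k f -> coloring G k (pi \o f).
Proof.
move=> piV piI [fV fE]; split=> [x xG|e eG]; first exact/piV/fV.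
by have [u [w [ue we ne]]] := fE e eG; exists u, w; rewrite /= (inj_eq piI).
Qed.

Lemma exists_relabel1 k a p : a < k -> p < k -> exists pi : nat -> nat,
  [/\ forall z, z < k -> pi z < k, injective pi & pi a = p].
Proof.
move=> ak pk; exists (swap_color a p); split; first by move=> z; apply: swap_color_lt.
  exact: can_inj (swap_colorK a p).
by rewrite /swap_color eqxx.
Qed.

Lemma exists_relabel2 k a b p q : a < k -> b < k -> p < k -> q < k ->
  a != b -> p != q -> exists pi : nat -> nat,
  [/\ forall z, z < k -> pi z < k, injective pi, pi a = p & pi b = q].
Proof.
move=> ak bk pk qk ab pq; set b' := swap_color a p b.
have pa : swap_color a p a = p by rewrite /swap_color eqxx.
have pb' : p != b' by rewrite -pa (can_eq (swap_colorK a p)).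
exists (swap_color b' q \o swap_color a p); split.
- by move=> z zk /=; do 2!apply: swap_color_lt => //.
- by apply: inj_comp; apply: can_inj (swap_colorK _ _).
- by rewrite /= pa /swap_color (negbTE pb') (negbTE pq).
- by rewrite /= -/b' /swap_color eqxx.
Qed.

End Colorings.

Section Splitting.
Variables (T : finType) (k : nat) (G1 G2 : hgraph T) (et : {set T}) (vt : T)
  (s : {set T} -> {set T}) (x y : T).
Hypotheses (k2 : 2 <= k) (hG1 : is_hypergraph G1) (hG2 : is_hypergraph G2)
  (disV : [disjoint hV G1 & hV G2]) (crit1 : critical k.+1 G1)
  (crit2 : critical k.+1 G2) (etG1 : et \in hE G1) (vtG2 : vt \in hV G2)
  (adm : admissible et G2 vt s) (xy : x != y) (etxy : et = [set x; y]).

Local Notation G := (splitting G1 et G2 vt s).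
Local Notation X2 := ((hV G2 :\ vt) :|: et).
Local Notation spliced e := ((e :\ vt) :|: s e).

Lemma et_sub_V1 z : z \in et -> z \in hV G1.
Proof. by have [/subsetP etV _] := hG1 etG1; apply: etV. Qed.

Lemma V1_notin_V2 z : z \in hV G1 -> (z \in hV G2) = false.
Proof. exact: disjointFr. Qed.

Lemma et_cases z : z \in et -> z = x \/ z = y.
Proof. by rewrite etxy !inE => /orP [] /eqP; [left|right]. Qed.

Lemma x_in_et : x \in et. Proof. by rewrite etxy !inE eqxx. Qed.
Lemma y_in_et : y \in et. Proof. by rewrite etxy !inE eqxx orbT. Qed.

Lemma in_splittingV z : (z \in hV G) = (z \in hV G1) || (z \in hV G2 :\ vt).
Proof. by rewrite inE. Qed.

Lemma in_star e : (e \in star G2 vt) = (e \in hE G2) && (vt \in e).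
Proof. by rewrite inE. Qed.

Lemma admissible_star e : e \in star G2 vt ->
  [/\ s e != set0, s e \subset et & e \in hE G2].
Proof. by move=> es; have [? ?] := adm.1 e es; move: es; rewrite in_star => /andP []. Qed.

Lemma splitting_edgeP e0 : e0 \in hE G ->
  [\/ e0 \in hE G1 /\ e0 != et, e0 \in hE G2 /\ vt \notin e0
    | exists2 e, e \in star G2 vt & e0 = spliced e].
Proof.
rewrite !inE => /orP [/orP [/andP [ne eG1]|/andP [nst eG2]]|/imsetP [e es ->]].
- by apply: Or31.
- by apply: Or32; move: nst; rewrite eG2.
- by apply: Or33; exists e.
Qed.

Lemma splitting_edge_G1 e0 : e0 \in hE G1 -> e0 != et -> e0 \in hE G.
Proof. by move=> e0G1 ne; rewrite !inE e0G1 ne. Qed.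

Lemma splitting_edge_G2 e0 : e0 \in hE G2 -> vt \notin e0 -> e0 \in hE G.
Proof. by move=> e0G2 ve0; rewrite !inE e0G2 (negbTE ve0) orbT. Qed.

Lemma splitting_edge_spliced e : e \in star G2 vt -> spliced e \in hE G.
Proof. by move=> es; rewrite inE; apply/orP; right; apply: imset_f. Qed.

Lemma edge_G2_sub_X2 e : e \in hE G2 -> vt \notin e -> e \subset X2.
Proof.
move=> eG ve; have [/subsetP eV _] := hG2 eG; apply/subsetP=> z ze.
by rewrite !inE eV // andbT; apply/orP; left; apply: contraNneq ve => <-.
Qed.

Lemma spliced_sub_X2 e : e \in star G2 vt -> spliced e \subset X2.
Proof.
move=> es; have [_ /subsetP se eG] := admissible_star es; have [/subsetP eV _] := hG2 eG.
by apply/subsetP=> z; rewrite !inE => /orP [/andP [-> /eV ->]|/se ->]; rewrite ?orbT.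
Qed.

Lemma X2_sub_V z : z \in X2 -> z \in hV G.
Proof. by rewrite in_splittingV !inE => /orP [->|/et_sub_V1 ->]; rewrite ?orbT. Qed.

Lemma X2_V1_et z : z \in X2 -> z \in hV G1 -> z \in et.
Proof. by rewrite !inE => /orP [/andP [_ z2] /V1_notin_V2|//]; rewrite z2. Qed.

Lemma splitting_hypergraph : is_hypergraph G.
Proof.
move=> e0 /splitting_edgeP [[e0G1 _]|[e0G2 ve0]|[e es ->]].
- have [/subsetP e0V e02] := hG1 e0G1; split=> //.
  by apply/subsetP=> z /e0V z1; rewrite in_splittingV z1.
- have [_ e02] := hG2 e0G2; split=> //.
  by apply/subsetP=> z /(subsetP (edge_G2_sub_X2 e0G2 ve0)) /X2_sub_V.
- split; first by apply/subsetP=> z /(subsetP (spliced_sub_X2 es)) /X2_sub_V.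
  have [/set0Pn [w ws] /subsetP se eG] := admissible_star es.
  have [u uG2 uev] := edge_other_vertex vt hG2 eG.
  have uw : u != w by apply: contraTneq uG2 => ->; rewrite V1_notin_V2 ?et_sub_V1 ?se.
  have <- : #|[set u; w]| = 2 by rewrite cards2 uw.
  apply: subset_leq_card; apply/subsetP=> z.
  by rewrite in_set2 => /orP [] /eqP ->; rewrite in_setU ?uev ?ws ?orbT.
Qed.

Lemma splitting_edge_G1_or_X2 e0 : e0 \in hE G ->
  e0 \in hE G1 /\ e0 != et \/ e0 \subset X2.
Proof.
case/splitting_edgeP=> [e0G1|[e0G2 ve0]|[e es ->]]; first by left.
  by right; apply: edge_G2_sub_X2.
by right; apply: spliced_sub_X2.
Qed.

Lemma induced_X2_sub : hV (induced G X2) \subset hV G /\ hE (induced G X2) \subset hE G.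
Proof.
split; first by apply/subsetP=> z /X2_sub_V.
by apply/subsetP=> e0; rewrite inE => /andP [].
Qed.

Lemma colorable_G2_of_equal_ends h : coloring (induced G X2) k h -> h x = h y ->
  colorable G2 k.
Proof.
move=> [hX2V hX2E] hxy; exists (fun z => if z == vt then h x else h z).
split=> [z zG2|e eG].
  by case: eqP => [_|/eqP zvt]; apply: hX2V; rewrite !inE ?x_in_et ?zvt ?zG2 ?orbT.
have [vte|vtne] := boolP (vt \in e).
  have es : e \in star G2 vt by rewrite in_star eG vte.
  have [_ /subsetP se _] := admissible_star es.
  have spG : spliced e \in hE (induced G X2).
    by rewrite inE splitting_edge_spliced ?spliced_sub_X2.
  apply: polychromatic_transfer (hX2E _ spG) => z; rewrite !inE => /orP [/andP [zvt ze]|zs].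
    by exists z => //; rewrite (negbTE zvt).
  by exists vt; rewrite ?eqxx //; case: (et_cases (se z zs)) => ->.
have eG' : e \in hE (induced G X2).
  by rewrite inE splitting_edge_G2 ?edge_G2_sub_X2.
apply: polychromatic_transfer (hX2E _ eG') => z ze; exists z => //.
by case: eqP ze vtne => // -> ->.
Qed.

Lemma splitting_not_colorable : ~ colorable G k.
Proof.
move=> [h ch]; have [hxy|hxy] := eqVneq (h x) (h y).
  apply: (critical_not_colorable crit2); apply: colorable_G2_of_equal_ends hxy.
  by have [sV sE] := induced_X2_sub; apply: coloring_sub ch.
apply: (critical_not_colorable crit1); exists h; apply: (coloring_of_del_edge (e := et)).
  apply: coloring_sub ch; apply/subsetP=> /=.
    by move=> z; rewrite in_splittingV => ->.
  by move=> e0 /setD1P [ne e0G1]; apply: splitting_edge_G1.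
by rewrite etxy; apply/polychromatic_pair.
Qed.

Definition glue (f g : T -> nat) z := if z \in hV G1 then f z else g z.

Definition lift (e : {set T}) := if vt \in e then spliced e else e.

Lemma glue_lt f g z : (forall z, z \in hV G1 -> f z < k) ->
  (forall z, z \in hV G2 :\ vt -> g z < k) -> z \in hV G -> glue f g z < k.
Proof. by rewrite /glue in_splittingV => fV gV; case: ifP => [/fV|_ /gV]. Qed.

Lemma glue_polychromatic_G1 f g e0 : e0 \in hE G1 -> polychromatic f e0 ->
  polychromatic (glue f g) e0.
Proof.
move=> e0G1; have [/subsetP e0V _] := hG1 e0G1.
by apply: polychromatic_transfer => z ze; exists z; rewrite /glue ?e0V.
Qed.

Lemma glue_coloring_del_lift e f g : e \in hE G2 ->
  coloring (del_edge G2 e) k g -> coloring (del_edge G1 et) k f ->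
  f x = g vt -> f y = g vt -> coloring (del_edge G (lift e)) k (glue f g).
Proof.
move=> eG [gV gE] [fV fE] fx fy; split=> [z|e0 /setD1P [ne e0G]].
  by apply: glue_lt => // z' z'G2; apply: gV; move: z'G2; rewrite inE => /andP [].
case/splitting_edgeP: (e0G) => [[e0G1 e0et]|[e0G2 ve0]|[e' es e0E]].
- by apply: glue_polychromatic_G1 => //; apply: fE; rewrite !inE e0et.
- have e0e : e0 != e.
    by move: ne; rewrite /lift; case: ifP => // vte _; apply: contraNneq ve0 => ->.
  have [/subsetP e0V _] := hG2 e0G2.
  apply: polychromatic_transfer (gE e0 _); last by rewrite !inE e0e.
  move=> z ze; exists z => //.
  by rewrite /glue; case: ifP => // /V1_notin_V2; rewrite (e0V z ze).
- have [/set0Pn [w ws] /subsetP se e'G] := admissible_star es.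
  have e'e : e' != e.
    have /andP [_ vte'] : (e' \in hE G2) && (vt \in e') by rewrite -in_star.
    by apply: contraNneq ne => <-; rewrite /lift vte' e0E.
  rewrite e0E; apply: polychromatic_transfer (gE e' _); last by rewrite !inE e'e.
  move=> z ze; have [->|zvt] := eqVneq z vt.
    exists w; first by rewrite inE ws orbT.
    by rewrite /glue et_sub_V1 ?se //; case: (et_cases (se w ws)) => ->.
  have [/subsetP e'V _] := hG2 e'G.
  exists z; first by rewrite !inE zvt ze.
  by rewrite /glue; case: ifP => // /V1_notin_V2; rewrite (e'V z ze).
Qed.

Lemma splitting_del_lift_colorable e : e \in hE G2 -> colorable (del_edge G (lift e)) k.
Proof.
move=> eG; have [g cg] := critical_del_edge_colorable hG2 crit2 eG.
have [f cf] := critical_del_edge_colorable hG1 crit1 etG1.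
have fxy : f x = f y.
  apply/eqP/negPn/negP => /polychromatic_pair; rewrite -etxy => fet.
  by apply: (critical_not_colorable crit1); exists f; apply: coloring_of_del_edge fet.
have fxk : f x < k by apply: cf.1; rewrite et_sub_V1 ?x_in_et.
have [pi [piV piI pix]] := exists_relabel1 fxk (cg.1 vt vtG2).
exists (glue (pi \o f) g); apply: glue_coloring_del_lift => //=; rewrite -?fxy //.
exact: coloring_relabel.
Qed.

Lemma glue_coloring_del_G1 e0 f g : coloring (del_edge G1 e0) k f ->
  coloring (induced G X2) k g -> f x = g x -> f y = g y ->
  coloring (del_edge G e0) k (glue f g).
Proof.
move=> [fV fE] [gV gE] fgx fgy; split=> [z|e1 /setD1P [ne e1G]].
  by apply: glue_lt => // z' z'G2; apply: gV; rewrite inE z'G2.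
case: (splitting_edge_G1_or_X2 e1G) => [[e1G1 _]|e1X2].
  by apply: glue_polychromatic_G1 => //; apply: fE; rewrite !inE ne.
apply: polychromatic_transfer (gE e1 _); last by rewrite inE e1G.
move=> z ze; exists z => //; rewrite /glue; case: ifP => // /(X2_V1_et (subsetP e1X2 z ze)).
by case/et_cases => ->.
Qed.

Lemma splitting_del_G1_colorable e0 : colorable (induced G X2) k ->
  e0 \in hE G1 -> e0 != et -> colorable (del_edge G e0) k.
Proof.
move=> [g cg] e0G1 ne; have [f cf] := critical_del_edge_colorable hG1 crit1 e0G1.
have fxy : f x != f y.
  by apply/polychromatic_pair; rewrite -etxy; apply: cf.2; rewrite !inE eq_sym ne.
have gxy : g x != g y.
  by apply/eqP=> /(colorable_G2_of_equal_ends cg); apply: critical_not_colorable crit2.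
have inX2 z : z \in et -> z \in hV (induced G X2) by rewrite !inE => ->; rewrite orbT.
have inV1 z : z \in et -> z \in hV (del_edge G1 e0) by apply: et_sub_V1.
have [pi [piV piI pix piy]] := exists_relabel2 (cg.1 x (inX2 _ x_in_et))
  (cg.1 y (inX2 _ y_in_et)) (cf.1 x (inV1 _ x_in_et)) (cf.1 y (inV1 _ y_in_et)) gxy fxy.
exists (glue f (pi \o g)); apply: glue_coloring_del_G1 => //.
exact: coloring_relabel.
Qed.

Lemma splitting_del_edge_colorable e0 : colorable (induced G X2) k ->
  e0 \in hE G -> colorable (del_edge G e0) k.
Proof.
move=> cX2 /splitting_edgeP [[e0G1 ne]|[e0G2 ve0]|[e es ->]].
- exact: splitting_del_G1_colorable.
- by have := splitting_del_lift_colorable e0G2; rewrite /lift (negbTE ve0).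
- have [_ _ eG] := admissible_star es; have := splitting_del_lift_colorable eG.
  by move: es; rewrite in_star /lift => /andP [_ ->].
Qed.

Lemma splitting_vertex_in_edge v : v \in hV G -> exists2 e0, e0 \in hE G & v \in e0.
Proof.
have k0 : 0 < k := ltnW k2.
rewrite in_splittingV => /orP [vG1|].
  have [e eG ve] := critical_vertex_in_edge k0 hG1 crit1 vG1.
  have [eet|ne] := eqVneq e et; last by exists e => //; apply: splitting_edge_G1.
  have : v \in \bigcup_(e in star G2 vt) s e by rewrite adm.2 -eet.
  case/bigcupP=> e' es vs; exists (spliced e'); first exact: splitting_edge_spliced.
  by rewrite inE vs orbT.
rewrite !inE => /andP [vvt vG2].
have [e eG ve] := critical_vertex_in_edge k0 hG2 crit2 vG2.
have [vte|vtne] := boolP (vt \in e); last by exists e => //; apply: splitting_edge_G2.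
exists (spliced e); first by apply: splitting_edge_spliced; rewrite in_star eG.
by rewrite !inE vvt ve.
Qed.

Lemma splitting_critical : colorable (induced G X2) k -> critical k.+1 G.
Proof.
move=> cX2; apply: critical_intro.
- exact: splitting_hypergraph.
- exact: splitting_not_colorable.
- by move=> e0; apply: splitting_del_edge_colorable.
- exact: splitting_vertex_in_edge.
Qed.

(* Otherwise every edge of G1 lies inside et, so G1 would have the single edge et
   and be 2-colorable. *)
Lemma et_proper_V1 : et \proper hV G1.
Proof.
rewrite properEneq; apply/andP; split; last by apply/subsetP=> z /et_sub_V1.
apply/eqP=> etV; apply: (critical_not_colorable crit1).
exists (fun z => if z == x then 0 else 1); split=> [z _|e eG].
  by case: eqP => // _; apply: leq_trans k2.
have [/subsetP eV e2] := hG1 eG.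
have -> : e = et.
  apply/eqP; rewrite eqEcard etxy cards2 xy e2 andbT -etxy.
  by apply/subsetP=> z /eV; rewrite etV.
have yx : (y == x) = false by rewrite eq_sym (negbTE xy).
by exists x, y; rewrite x_in_et y_in_et eqxx yx.
Qed.

Lemma et_proper_X2 : et \proper X2.
Proof.
rewrite properE subsetUr; apply/subsetPn.
have [e eG vte] := critical_vertex_in_edge (ltnW k2) hG2 crit2 vtG2.
have [w wG2 wev] := edge_other_vertex vt hG2 eG.
exists w; first by move: wev; rewrite !inE wG2 => /andP [-> _].
by apply: contraTN wG2 => /et_sub_V1 /V1_notin_V2 ->.
Qed.

Lemma splitting_separating : separating G et.
Proof.
exists (hV G1), X2; split.
- apply/setP=> z; rewrite in_splittingV !inE.
  by case: (boolP (z \in et)) => [/et_sub_V1 ->|_]; rewrite ?orbF ?orbT.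
- apply/setP=> e0; rewrite in_setU !induced_edgeE.
  have [e0G /=|//] := boolP (e0 \in hE G).
  case: (splitting_edge_G1_or_X2 e0G) => [[e0G1 _]|->]; last by rewrite orbT.
  by have [-> _] := hG1 e0G1.
- apply/setP=> z; rewrite !inE; case: (boolP (z \in et)) => [/et_sub_V1 ->|_].
    by rewrite orbT.
  by rewrite orbF; case: (boolP (z \in hV G1)) => //= /V1_notin_V2 ->; rewrite andbF.
- exact: proper_card et_proper_V1.
- exact: proper_card et_proper_X2.
Qed.

End Splitting.

Theorem theorem16 (T : finType) (k : nat) (G1 G2 : hgraph T)
  (et : {set T}) (vt : T) (s : {set T} -> {set T}) :
  2 <= k ->
  is_hypergraph G1 -> is_hypergraph G2 ->
  [disjoint hV G1 & hV G2] ->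
  critical k.+1 G1 -> critical k.+1 G2 ->
  et \in hE G1 -> #|et| = 2 ->
  vt \in hV G2 ->
  admissible et G2 vt s ->
  colorable (induced (splitting G1 et G2 vt s) ((hV G2 :\ vt) :|: et)) k ->
  critical k.+1 (splitting G1 et G2 vt s) /\
  separating (splitting G1 et G2 vt s) et /\ #|et| = 2.
Proof.
move=> k2 hG1 hG2 disV crit1 crit2 etG1 et2 vtG2 adm cX2.
have /cards2P [x [y [xy etxy]]] : #|et| == 2 by rewrite et2.
split; first exact: splitting_critical k2 hG1 hG2 disV crit1 crit2 etG1 vtG2 adm etxy cX2.
split=> //.
exact: splitting_separating k2 hG1 hG2 disV crit1 crit2 etG1 vtG2 adm xy etxy.
Qed.
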